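(* Let $X$ be a non-empty compact ultrametric space with a finite similarity structure $\mathrm{Sim}_X$ and let $\Gamma=\Gamma(\mathrm{Sim}_X)$. Under the action of $\Gamma$ on the set of vertices given by $\gamma\{[f_1,B_1],\dots,[f_k,B_k]\}=\{[\gamma f_1,B_1],\dots,[\gamma f_k,B_k]\}$, the stabilizer in $\Gamma$ of every vertex is finite.
   Context: A *ball* in $X$ is a closed metric ball of positive radius. A *finite similarity structure* $\mathrm{Sim}_X$ assigns to each ordered pair of balls $B_1,B_2$ a finite (possibly empty) set $\mathrm{Sim}_X(B_1,B_2)$ of surjective similarities $B_1\to B_2$, closed under identities, inverses, compositions, and restrictions to sub-balls (if $h\in\mathrm{Sim}_X(B_1,B_2)$ and $B_3\subseteq B_1$ is a ball, $h|_{B_3}\in\mathrm{Sim}_X(B_3,h(B_3))$). An embedding $h:B\to X$ ($B$ a ball) is *locally determined by* $\mathrm{Sim}_X$ if every $x\in B$ lies in a ball $B'\subseteq B$ with $h(B')$ a ball and $h|_{B'}\in\mathrm{Sim}_X(B',h(B'))$. $\Gamma(\mathrm{Sim}_X)$ is the group of homeomorphisms $X\to X$ locally determined by $\mathrm{Sim}_X$. Let $\mathcal S$ be the set of pairs $(f,B)$ with $B$ a ball and $f:B\to X$ an embedding locally determined by $\mathrm{Sim}_X$; $(f_1,B_1)\sim(f_2,B_2)$ iff $f_2h=f_1$ for some $h\in\mathrm{Sim}_X(B_1,B_2)$; $[f,B]$ is the class (for $\gamma\in\Gamma$, $[\gamma f,B]$ is a well-defined class). A *vertex* is a finite set $\{[f_1,B_1],\dots,[f_k,B_k]\}$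 of classes with $f_1(B_1),\dots,f_k(B_k)$ pairwise disjoint and with union $X$. *)

From Stdlib Require Import Reals List.
Open Scope R_scope.

Section Defs.
Variables (X : Type) (d : X -> X -> R).

Definition is_ultrametric : Prop :=
  (forall x y, 0 <= d x y) /\
  (forall x y, d x y = 0 <-> x = y) /\
  (forall x y, d x y = d y x) /\
  (forall x y z, d x z <= Rmax (d x y) (d y z)).

Definition is_open (U : X -> Prop) : Prop :=
  forall x, U x -> exists r, 0 < r /\ forall y, d x y < r -> U y.

Definition is_compact : Prop :=
  forall (I : Type) (U : I -> X -> Prop),
    (forall i, is_open (U i)) -> (forall x, exists i, U i x) ->
    exists l : list I, forall x, exists i, In i l /\ U i x.

Definition is_ball (B : X -> Prop) : Prop :=
  exists c r, 0 < r /\ forall y, B y <-> d c y <= r.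

Definition image (f : X -> X) (B : X -> Prop) : X -> Prop :=
  fun y => exists x, B x /\ f x = y.

Definition agree_on (B : X -> Prop) (f g : X -> X) : Prop :=
  forall x, B x -> f x = g x.

Definition same_set (A B : X -> Prop) : Prop := forall x, A x <-> B x.

(** surjective similarity B1 -> B2 (maps are total functions; only the
    values on B1 matter) *)
Definition is_similarity (B1 B2 : X -> Prop) (h : X -> X) : Prop :=
  (exists lam, 0 < lam /\ forall x y, B1 x -> B1 y -> d (h x) (h y) = lam * d x y) /\
  (forall x, B1 x -> B2 (h x)) /\
  (forall y, B2 y -> exists x, B1 x /\ h x = y).

(** finite similarity structure; [sim B1 B2 h] means "(the restriction to B1
    of) h belongs to Sim_X(B1,B2)". *)
Record FinSimStructure := {
  sim : (X -> Prop) -> (X -> Prop) -> (X -> X) -> Prop;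
  sim_wd : forall B1 B2 h, sim B1 B2 h ->
     is_ball B1 /\ is_ball B2 /\ is_similarity B1 B2 h;
  sim_saturated : forall B1 B2 h B1' B2' h', sim B1 B2 h ->
     same_set B1 B1' -> same_set B2 B2' -> agree_on B1 h h' -> sim B1' B2' h';
  sim_finite : forall B1 B2, exists l : list (X -> X),
     forall h, sim B1 B2 h -> exists h', In h' l /\ agree_on B1 h h';
  sim_id : forall B, is_ball B -> sim B B (fun x => x);
  sim_inv : forall B1 B2 h, sim B1 B2 h -> exists g, sim B2 B1 g /\
     (forall x, B1 x -> g (h x) = x) /\ (forall y, B2 y -> h (g y) = y);
  sim_comp : forall B1 B2 B3 h g, sim B1 B2 h -> sim B2 B3 g ->
     sim B1 B3 (fun x => g (h x));
  sim_restr : forall B1 B2 B3 h, sim B1 B2 h -> is_ball B3 ->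
     (forall x, B3 x -> B1 x) -> sim B3 (image h B3) h
}.

Variable S : FinSimStructure.

Definition continuous_on (B : X -> Prop) (f : X -> X) : Prop :=
  forall x, B x -> forall eps, 0 < eps -> exists delta, 0 < delta /\
    forall y, B y -> d x y < delta -> d (f x) (f y) < eps.

Definition is_embedding (B : X -> Prop) (f : X -> X) : Prop :=
  (forall x y, B x -> B y -> f x = f y -> x = y) /\
  continuous_on B f /\
  (forall x, B x -> forall eps, 0 < eps -> exists delta, 0 < delta /\
    forall y, B y -> d (f x) (f y) < delta -> d x y < eps).

Definition is_homeomorphism (f : X -> X) : Prop :=
  continuous_on (fun _ => True) f /\
  exists g, (forall x, g (f x) = x) /\ (forall y, f (g y) = y) /\
            continuous_on (fun _ => True) g.

Definition locally_determined (B : X -> Prop) (h : X -> X) : Prop :=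
  forall x, B x -> exists B', is_ball B' /\ (forall y, B' y -> B y) /\ B' x /\
    is_ball (image h B') /\ sim S B' (image h B') h.

Definition in_Gamma (g : X -> X) : Prop :=
  is_homeomorphism g /\ locally_determined (fun _ => True) g.

Definition in_calS (p : (X -> X) * (X -> Prop)) : Prop :=
  is_ball (snd p) /\ is_embedding (snd p) (fst p) /\
  locally_determined (snd p) (fst p).

Definition calS_equiv (p q : (X -> X) * (X -> Prop)) : Prop :=
  exists h, sim S (snd p) (snd q) h /\ forall x, snd p x -> fst q (h x) = fst p x.

Definition dflt_pair : (X -> X) * (X -> Prop) := (fun x => x, fun _ => False).

(** a vertex, given by a list of representatives of its classes *)
Definition is_vertex (v : list ((X -> X) * (X -> Prop))) : Prop :=
  (forall p, In p v -> in_calS p) /\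
  (forall i j, (i < length v)%nat -> (j < length v)%nat -> i <> j ->
     forall y, image (fst (nth i v dflt_pair)) (snd (nth i v dflt_pair)) y ->
               ~ image (fst (nth j v dflt_pair)) (snd (nth j v dflt_pair)) y) /\
  (forall y, exists p, In p v /\ image (fst p) (snd p) y).

Definition act (g : X -> X) (p : (X -> X) * (X -> Prop)) : (X -> X) * (X -> Prop) :=
  (fun x => g (fst p x), snd p).

(** g v = v as sets of classes *)
Definition stabilizes (g : X -> X) (v : list ((X -> X) * (X -> Prop))) : Prop :=
  (forall p, In p v -> exists q, In q v /\ calS_equiv (act g p) q) /\
  (forall q, In q v -> exists p, In p v /\ calS_equiv (act g p) q).

End Defs.

(** Let v = {[f_1,B_1],...,[f_k,B_k]} be a vertex and let g stabilize it.
    For each i, g [f_i,B_i] = [f_q,B_q] for some piece q of v, i.e. there is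
    h in Sim_X(B_i,B_q) with g o f_i = f_q o h on B_i.  Since v is finite and
    each Sim_X(B_i,B_q) is finite, the composite g o f_i (restricted to B_i)
    ranges over a finite list P of maps, independent of g.  Since the images
    f_i(B_i) cover X, g is determined by the k-tuple of its composites
    (g o f_1, ..., g o f_k).  Hence g belongs to the image of the finite set
    of k-tuples over P under a fixed reconstruction map. *)

From Stdlib Require Import Reals List ClassicalEpsilon FunctionalExtensionality Lia.

Section Tuples.
Variable A : Type.

Fixpoint tuples (n : nat) (P : list A) : list (list A) :=
  match n with
  | O => nil :: nil
  | S n' => flat_map (fun a => map (cons a) (tuples n' P)) P
  end.

Lemma tuples_complete (P : list A) (c : list A) :
  incl c P -> In c (tuples (length c) P).
Proof.
  induction c as [|a c IH]; intros Hc; simpl; [now left|].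
  apply in_flat_map. exists a. split; [apply Hc; now left|].
  apply in_map, IH. intros b Hb. apply Hc. now right.
Qed.

Lemma choose_tuple (P : list A) (dflt : A) (n : nat) (R : nat -> A -> Prop) :
  (forall i, (i < n)%nat -> exists a, In a P /\ R i a) ->
  exists c, length c = n /\ incl c P /\
    forall i, (i < n)%nat -> R i (nth i c dflt).
Proof.
  revert R; induction n as [|n IH]; intros R HR.
  - exists nil. repeat split; [intros a []|intros i Hi; lia].
  - destruct (HR 0%nat ltac:(lia)) as [a0 [Ha0P Ha0R]].
    destruct (IH (fun i a => R (S i) a)) as [c [Hlen [HcP HcR]]].
    { intros i Hi. apply HR. lia. }
    exists (a0 :: c). split; [simpl; lia|]. split.
    + intros a [<-|Ha]; auto.
    + intros [|i] Hi; [exact Ha0R|]. apply HcR. lia.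
Qed.

Lemma common_list {B : Type} (l : list B) (Pr : B -> list A -> Prop) :
  (forall b L L', Pr b L -> incl L L' -> Pr b L') ->
  (forall b, In b l -> exists L, Pr b L) ->
  exists L, forall b, In b l -> Pr b L.
Proof.
  intros Hmono; induction l as [|b l IH]; intros Hl.
  - exists nil. intros b [].
  - destruct (Hl b (or_introl eq_refl)) as [Lb HLb].
    destruct IH as [L HL]; [intros b' Hb'; apply Hl; now right|].
    exists (Lb ++ L). intros b' [<-|Hb'].
    + apply (Hmono _ Lb); [exact HLb|apply incl_appl, incl_refl].
    + apply (Hmono _ L); [now apply HL|apply incl_appr, incl_refl].
Qed.

End Tuples.

Section Reconstruction.
Variable X : Type.

Lemma reconstruct_from_cover (v : list ((X -> X) * (X -> Prop))) (dp : (X -> X) * (X -> Prop)) :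
  (forall y, exists p, In p v /\ image X (fst p) (snd p) y) ->
  exists F : list (X -> X) -> X -> X, forall g c,
    (forall i, (i < length v)%nat ->
       agree_on X (snd (nth i v dp)) (fun x => g (fst (nth i v dp) x))
                (nth i c (fun x => x))) ->
    F c = g.
Proof.
  intros Hcov.
  assert (Hpre : forall y, exists ix : nat * X, (fst ix < length v)%nat /\
      snd (nth (fst ix) v dp) (snd ix) /\ fst (nth (fst ix) v dp) (snd ix) = y).
  { intros y. destruct (Hcov y) as [p [Hp [x [Hx Hfx]]]].
    destruct (In_nth v p dp Hp) as [i [Hi Hnth]].
    exists (i, x). simpl. rewrite Hnth. auto. }
  (* [pre y] is a chosen index [i] and point [x] of [B_i] with [f_i x = y] *)
  set (pre := fun y => proj1_sig (constructive_indefinite_description _ (Hpre y))).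
  exists (fun c y => nth (fst (pre y)) c (fun x => x) (snd (pre y))).
  intros g c Hc. apply functional_extensionality. intros y.
  destruct (proj2_sig (constructive_indefinite_description _ (Hpre y)))
    as [Hi [Hx Hy]].
  fold (pre y) in Hi, Hx, Hy.
  rewrite <- (Hc _ Hi _ Hx), Hy. reflexivity.
Qed.

End Reconstruction.

Section Composites.
Variables (X : Type) (d : X -> X -> R) (S : FinSimStructure X d).

Definition contains_composites (v : list ((X -> X) * (X -> Prop))) (P : list (X -> X)) : Prop :=
  forall p q h, In p v -> In q v -> sim X d S (snd p) (snd q) h ->
    exists phi, In phi P /\ agree_on X (snd p) (fun x => fst q (h x)) phi.

Lemma finite_composites (v : list ((X -> X) * (X -> Prop))) :
  exists P : list (X -> X), contains_composites v P.
Proof.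
  set (Pr := fun (pq : ((X -> X) * (X -> Prop)) * ((X -> X) * (X -> Prop)))
                 (P : list (X -> X)) => forall h,
    sim X d S (snd (fst pq)) (snd (snd pq)) h ->
    exists phi, In phi P /\
      agree_on X (snd (fst pq)) (fun x => fst (snd pq) (h x)) phi).
  destruct (common_list _ (list_prod v v) Pr) as [P HP].
  - intros pq L L' HL Hincl h Hh.
    destruct (HL h Hh) as [phi [Hphi Hag]]. exists phi. auto.
  - intros [p q] _. destruct (sim_finite X d S (snd p) (snd q)) as [l Hl].
    exists (map (fun h x => fst q (h x)) l). intros h Hh.
    destruct (Hl h Hh) as [h' [Hh' Hag]].
    exists (fun x => fst q (h' x)). split; [exact (in_map (fun h x => fst q (h x)) l h' Hh')|].
    intros x Hx. simpl. now rewrite (Hag x Hx).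
  - exists P. intros p q h Hp Hq Hh.
    exact (HP (p, q) (in_prod v v p q Hp Hq) h Hh).
Qed.

Lemma stabilizer_composites (v : list ((X -> X) * (X -> Prop))) (P : list (X -> X)) g p :
  contains_composites v P -> stabilizes X d S g v -> In p v ->
  exists phi, In phi P /\ agree_on X (snd p) (fun x => g (fst p x)) phi.
Proof.
  intros HP [Hst _] Hp.
  destruct (Hst p Hp) as [q [Hq [h [Hsim Hh]]]]. simpl in Hsim, Hh.
  destruct (HP p q h Hp Hq Hsim) as [phi [Hphi Hag]].
  exists phi. split; [exact Hphi|].
  intros x Hx. rewrite <- (Hag x Hx). symmetry. now apply Hh.
Qed.

End Composites.

Theorem lemma6p2 (X : Type) (d : X -> X -> R)
  (Hult : is_ultrametric X d) (Hcpt : is_compact X d) (Hne : inhabited X)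
  (S : FinSimStructure X d) (v : list ((X -> X) * (X -> Prop)))
  (Hv : is_vertex X d S v) :
  exists l : list (X -> X),
    forall g, in_Gamma X d S g -> stabilizes X d S g v -> In g l.
Proof.
  destruct Hv as [_ [_ Hcov]].
  destruct (reconstruct_from_cover X v (dflt_pair X) Hcov) as [F HF].
  destruct (finite_composites X d S v) as [P HP].
  exists (map F (tuples _ (length v) P)).
  intros g _ Hst.
  destruct (choose_tuple _ P (fun x => x) (length v)
    (fun i phi => agree_on X (snd (nth i v (dflt_pair X)))
                    (fun x => g (fst (nth i v (dflt_pair X)) x)) phi))
    as [c [Hlen [HcP Hc]]].
  { intros i Hi. apply (stabilizer_composites X d S v P g); auto.
    now apply nth_In. }
  rewrite <- (HF g c Hc), <- Hlen.
  apply in_map, tuples_complete, HcP.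
Qed.
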